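(* Consider a human–algorithm system (as defined in the context). If either $a_i\le h_i$ for all $i\in\{1,\dots,N\}$, or $a_i\ge h_i$ for all $i\in\{1,\dots,N\}$, then the system does not exhibit complementarity.
   Context: A human–algorithm system consists of: an integer $N\ge1$ (number of regimes); probabilities $p_1,\dots,p_N\ge 0$ with $\sum_i p_i=1$; algorithmic losses $a_1,\dots,a_N\ge 0$ and unaided-human losses $h_1,\dots,h_N\ge0$; and a combining function $c:[0,\infty)^2\to\mathbb{R}$ satisfying $\min(a,h)\le c(a,h)\le\max(a,h)$ for all $a,h\ge0$, where $c(a_i,h_i)$ is the loss of the combined system in regime $i$. Write $A=\sum_i p_i a_i$ and $H=\sum_i p_i h_i$. The system exhibits complementarity if $\sum_{i=1}^N p_i\,c(a_i,h_i)<\min(A,H)$. *)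

From mathcomp Require Import all_boot all_order all_algebra.
Set Implicit Arguments. Unset Strict Implicit. Unset Printing Implicit Defensive.
Import Order.TTheory GRing.Theory Num.Theory.
Local Open Scope ring_scope.

(* Regimes are indexed by 'I_N (i.e. {0,...,N-1} standing for {1,...,N}). *)

Definition expected_loss (R : realFieldType) (N : nat) (p x : 'I_N -> R) : R :=
  \sum_(i < N) p i * x i.

Definition combined_loss (R : realFieldType) (N : nat) (p a h : 'I_N -> R)
  (c : R -> R -> R) : R :=
  \sum_(i < N) p i * c (a i) (h i).

Definition complementarity (R : realFieldType) (N : nat) (p a h : 'I_N -> R)
  (c : R -> R -> R) : Prop :=
  combined_loss p a h c < Num.min (expected_loss p a) (expected_loss p h).

(* If a_i <= h_i in every regime, then c(a_i, h_i) >= min(a_i, h_i) = a_i, and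
   averaging with the nonnegative weights p_i gives a combined loss of at least
   A >= min(A, H); symmetrically with H when h_i <= a_i everywhere. *)

From mathcomp Require Import all_boot all_order all_algebra.
Set Implicit Arguments. Unset Strict Implicit. Unset Printing Implicit Defensive.
Import Order.TTheory GRing.Theory Num.Theory.
Local Open Scope ring_scope.

Section CombinedLoss.

Variables (R : realFieldType) (N : nat) (p a h : 'I_N -> R) (c : R -> R -> R).

Lemma not_complementarity_of_le_combined :
  expected_loss p a <= combined_loss p a h c \/
  expected_loss p h <= combined_loss p a h c ->
  ~ complementarity p a h c.
Proof. by move=> le_comb; apply/negP; rewrite -leNgt ge_min; apply/orP. Qed.

Hypothesis p_ge0 : forall i, 0 <= p i.

Lemma ler_expected_loss (x y : 'I_N -> R) :
  (forall i, x i <= y i) -> expected_loss p x <= expected_loss p y.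
Proof. by move=> le_xy; apply: ler_sum => i _; exact: ler_wpM2l. Qed.

Hypothesis min_le_c : forall i, Num.min (a i) (h i) <= c (a i) (h i).

Lemma expected_loss_le_combined_l :
  (forall i, a i <= h i) -> expected_loss p a <= combined_loss p a h c.
Proof.
move=> le_ah; apply: ler_expected_loss => i.
by have := min_le_c i; rewrite (min_idPl (le_ah i)).
Qed.

Lemma expected_loss_le_combined_r :
  (forall i, h i <= a i) -> expected_loss p h <= combined_loss p a h c.
Proof.
move=> le_ha; apply: ler_expected_loss => i.
by have := min_le_c i; rewrite (min_idPr (le_ha i)).
Qed.

End CombinedLoss.

Theorem lemma3 (R : realFieldType) (N : nat) (p a h : 'I_N -> R)
  (c : R -> R -> R)
  (hN : (1 <= N)%N)
  (hp0 : forall i, 0 <= p i)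
  (hp1 : \sum_(i < N) p i = 1)
  (ha0 : forall i, 0 <= a i)
  (hh0 : forall i, 0 <= h i)
  (hc : forall x y : R, 0 <= x -> 0 <= y ->
          Num.min x y <= c x y /\ c x y <= Num.max x y)
  (hord : (forall i, a i <= h i) \/ (forall i, h i <= a i)) :
  ~ complementarity p a h c.
Proof.
have min_le_c i : Num.min (a i) (h i) <= c (a i) (h i).
  by have [] := hc _ _ (ha0 i) (hh0 i).
apply: not_complementarity_of_le_combined.
case: hord => [le_ah | le_ha]; [left | right].
- exact: expected_loss_le_combined_l.
- exact: expected_loss_le_combined_r.
Qed.
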